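(* Let $R=\mathbb{Z}[a]$, let $\Gamma$ be the ring defined below, and let \[ \Psi = Q_0Q_0 +a\,Q_0Q_1 -2\,Q_1Q_1 +a^2\,Q_0Q_2 -2a\,Q_1Q_2 +4\,Q_2Q_2\in\Gamma. \] Then $\Psi$ lies in the center of $\Gamma$.
   Context: $R=\mathbb{Z}[a]$ is a polynomial ring. $\Gamma$ is the associative ring equipped with a ring homomorphism $\eta\colon R\to\Gamma$, generated over $R$ by $Q_0,Q_1,Q_2$ subject to: (i) commutation relations: the $Q_i$ commute with elements of $\mathbb{Z}\subset R$, and $Q_0\,a = a^2Q_0-2aQ_1+6Q_2$, $Q_1\,a=3Q_0+aQ_2$, $Q_2\,a=-aQ_0+3Q_1$; (ii) adem relations: $Q_1Q_0=2Q_2Q_1-2Q_0Q_2$ and $Q_2Q_0=Q_0Q_1+aQ_0Q_2-2Q_1Q_2$. *)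

From HB Require Import structures.
From mathcomp Require Import all_boot all_order all_algebra.
Set Implicit Arguments. Unset Strict Implicit. Unset Printing Implicit Defensive.
Import GRing.Theory.
Local Open Scope ring_scope.

(* R = Z[a] is {poly int}, with a = 'X.  Gamma is characterised by
   its universal property: a "Gamma-structure" on a ring S is a ring morphism
   eta : R -> S together with Q0 Q1 Q2 : S satisfying the relations.
   (Commutation of Q_i with the integers is automatic in any ring.) *)

Definition gamma_rels (S : pzRingType) (eta : {rmorphism {poly int} -> S})
  (Q0 Q1 Q2 : S) : Prop :=
  let a := eta 'X in
  [/\ Q0 * a = a ^+ 2 * Q0 - 2%:R * a * Q1 + 6%:R * Q2,
      Q1 * a = 3%:R * Q0 + a * Q2,
      Q2 * a = - (a * Q0) + 3%:R * Q1,
      Q1 * Q0 = 2%:R * (Q2 * Q1) - 2%:R * (Q0 * Q2)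
    & Q2 * Q0 = Q0 * Q1 + a * (Q0 * Q2) - 2%:R * (Q1 * Q2)].

(* The subring of S generated by eta(R) and Q0, Q1, Q2 (the image of Gamma). *)
Inductive gamma_gen (S : pzRingType) (eta : {rmorphism {poly int} -> S})
  (Q0 Q1 Q2 : S) : S -> Prop :=
  | gg_eta r : gamma_gen eta Q0 Q1 Q2 (eta r)
  | gg_Q0 : gamma_gen eta Q0 Q1 Q2 Q0
  | gg_Q1 : gamma_gen eta Q0 Q1 Q2 Q1
  | gg_Q2 : gamma_gen eta Q0 Q1 Q2 Q2
  | gg_add x y : gamma_gen eta Q0 Q1 Q2 x -> gamma_gen eta Q0 Q1 Q2 y ->
                 gamma_gen eta Q0 Q1 Q2 (x + y)
  | gg_opp x : gamma_gen eta Q0 Q1 Q2 x -> gamma_gen eta Q0 Q1 Q2 (- x)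
  | gg_mul x y : gamma_gen eta Q0 Q1 Q2 x -> gamma_gen eta Q0 Q1 Q2 y ->
                 gamma_gen eta Q0 Q1 Q2 (x * y).

Definition Psi (S : pzRingType) (eta : {rmorphism {poly int} -> S})
  (Q0 Q1 Q2 : S) : S :=
  let a := eta 'X in
  Q0 * Q0 + a * (Q0 * Q1) - 2%:R * (Q1 * Q1) + a ^+ 2 * (Q0 * Q2)
  - 2%:R * a * (Q1 * Q2) + 4%:R * (Q2 * Q2).

From HB Require Import structures.
From mathcomp Require Import all_boot all_order all_algebra.
Set Implicit Arguments. Unset Strict Implicit. Unset Printing Implicit Defensive.
Import GRing.Theory.
Local Open Scope ring_scope.

(* It suffices to show that Psi commutes with the generators a, Q0, Q1, Q2.
   Each commutator [Psi, g] is a Z-linear combination of words in the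
   generators; rewriting with the relations (oriented so as to move a to the
   left and to remove the factors Q1 Q0 and Q2 Q0) and collecting equal words
   makes every coefficient vanish.  The rewriting is done by computation on
   formal linear combinations; as each step preserves their value in any ring
   satisfying the relations, neither termination nor confluence of the
   rewrite system is needed. *)

Definition word := seq nat.
Definition lincomb := seq (int * word).

Definition lincomb_mulr (p : lincomb) (t : word) : lincomb :=
  [seq (m.1, m.2 ++ t) | m <- p].
Definition lincomb_mull (x : nat) (p : lincomb) : lincomb :=
  [seq (m.1, x :: m.2) | m <- p].
Definition lincomb_scale (c : int) (p : lincomb) : lincomb :=
  [seq (c * m.1, m.2) | m <- p].

Definition commutator_lincomb (p : lincomb) (x : nat) : lincomb :=
  lincomb_mulr p [:: x] ++ lincomb_scale (-1) (lincomb_mull x p).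

Section Rewriting.

Variable rules : nat -> nat -> option lincomb.

Fixpoint rewrite_word (w : word) : option lincomb :=
  match w with
  | x :: ((y :: t) as w') =>
      if rules x y is Some r then Some (lincomb_mulr r t)
      else omap (lincomb_mull x) (rewrite_word w')
  | _ => None
  end.

Lemma rewrite_word_cons2 x y t :
  rewrite_word [:: x, y & t] =
  if rules x y is Some r then Some (lincomb_mulr r t)
  else omap (lincomb_mull x) (rewrite_word (y :: t)).
Proof. by []. Qed.

Definition rewrite_step (p : lincomb) : lincomb :=
  flatten [seq if rewrite_word m.2 is Some q then lincomb_scale m.1 q else [:: m]
          | m <- p].

Fixpoint add_monomial (m : int * word) (p : lincomb) : lincomb :=
  if p is n :: p' then
    if m.2 == n.2 then (m.1 + n.1, n.2) :: p' else n :: add_monomial m p'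
  else [:: m].

Definition collect (p : lincomb) : lincomb := foldr add_monomial [::] p.

Definition rewrites_to_zero (n : nat) (p : lincomb) : bool :=
  all (fun m => m.1 == 0) (collect (iter n rewrite_step p)).

End Rewriting.

Section Evaluation.

Variables (S : pzRingType) (letter : nat -> S).

Definition eval_word (w : word) : S := \prod_(x <- w) letter x.
Definition eval_lincomb (p : lincomb) : S :=
  \sum_(m <- p) m.1%:~R * eval_word m.2.

Lemma eval_lincomb_cat p q :
  eval_lincomb (p ++ q) = eval_lincomb p + eval_lincomb q.
Proof. exact: big_cat. Qed.

Lemma eval_lincomb_mulr p t :
  eval_lincomb (lincomb_mulr p t) = eval_lincomb p * eval_word t.
Proof.
rewrite /eval_lincomb big_map mulr_suml; apply: eq_bigr => m _.
by rewrite /eval_word big_cat mulrA.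
Qed.

Lemma eval_lincomb_mull x p :
  eval_lincomb (lincomb_mull x p) = letter x * eval_lincomb p.
Proof.
rewrite /eval_lincomb big_map mulr_sumr; apply: eq_bigr => m _.
by rewrite /eval_word big_cons !mulrA commr_int.
Qed.

Lemma eval_lincomb_scale c p :
  eval_lincomb (lincomb_scale c p) = c%:~R * eval_lincomb p.
Proof.
rewrite /eval_lincomb big_map mulr_sumr; apply: eq_bigr => m _.
by rewrite intrM mulrA.
Qed.

Lemma eval_commutator_lincomb p x :
  eval_lincomb (commutator_lincomb p x)
  = eval_lincomb p * letter x - letter x * eval_lincomb p.
Proof.
rewrite eval_lincomb_cat eval_lincomb_mulr eval_lincomb_scale eval_lincomb_mull.
by rewrite /eval_word big_seq1 mulN1r.
Qed.

Lemma eval_add_monomial m p :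
  eval_lincomb (add_monomial m p) = m.1%:~R * eval_word m.2 + eval_lincomb p.
Proof.
rewrite /eval_lincomb; elim: p => [|n p IH] /=; first by rewrite big_seq1 big_nil addr0.
case: eqP => [->|_]; first by rewrite !big_cons intrD mulrDl addrA.
by rewrite !big_cons IH addrCA.
Qed.

Lemma eval_collect p : eval_lincomb (collect p) = eval_lincomb p.
Proof.
elim: p => [|m p IH] //=.
by rewrite eval_add_monomial IH /eval_lincomb big_cons.
Qed.

Variable rules : nat -> nat -> option lincomb.

Hypothesis rules_sound :
  forall {x y r}, rules x y = Some r -> eval_lincomb r = letter x * letter y.

Lemma eval_rewrite_word w q :
  rewrite_word rules w = Some q -> eval_lincomb q = eval_word w.
Proof.
elim: w q => [|x [|y t] IH] q //; rewrite rewrite_word_cons2.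
case Exy: (rules x y) => [r|].
  by case=> <-; rewrite eval_lincomb_mulr (rules_sound Exy) /eval_word !big_cons mulrA.
case Ew: (rewrite_word rules (y :: t)) => [q'|] //= [<-].
by rewrite eval_lincomb_mull (IH _ Ew) /eval_word !big_cons.
Qed.

Lemma eval_rewrite_step p : eval_lincomb (rewrite_step rules p) = eval_lincomb p.
Proof.
rewrite /eval_lincomb big_flatten big_map; apply: eq_bigr => m _ /=.
case Ew: (rewrite_word rules m.2) => [q|]; last by rewrite big_seq1.
by rewrite -/(eval_lincomb _) eval_lincomb_scale (eval_rewrite_word Ew).
Qed.

Lemma rewrites_to_zero_eval n p : rewrites_to_zero rules n p -> eval_lincomb p = 0.
Proof.
move=> /allP zero_coefs.
have eval_iter k : eval_lincomb (iter k (rewrite_step rules) p) = eval_lincomb p.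
  by elim: k => //= k IH; rewrite eval_rewrite_step.
rewrite -(eval_iter n) -eval_collect.
by apply: big1_seq => m /andP[_ /zero_coefs/eqP ->]; rewrite mul0r.
Qed.

End Evaluation.

Lemma comm_rmorph_poly (S : pzRingType) (f : {rmorphism {poly int} -> S}) (c : S) :
  GRing.comm c (f 'X) -> forall p, GRing.comm c (f p).
Proof.
move=> cX; elim/poly_ind => [|p k cp]; first by rewrite rmorph0; apply: commr0.
rewrite rmorphD rmorphM; apply: commrD; first exact: commrM.
by have := rmorph_int (f \o polyC) k; rewrite intz /= => ->; apply: commr_int.
Qed.

Lemma comm_gamma_gen (S : pzRingType) (eta : {rmorphism {poly int} -> S})
    (Q0 Q1 Q2 c : S) :
  GRing.comm c (eta 'X) -> GRing.comm c Q0 -> GRing.comm c Q1 -> GRing.comm c Q2 ->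
  forall x, gamma_gen eta Q0 Q1 Q2 x -> GRing.comm c x.
Proof.
move=> cX c0 c1 c2 x; elim=> {x} //.
- exact: comm_rmorph_poly.
- by move=> x y _ cx _ cy; apply: commrD.
- by move=> x _ cx; apply: commrN.
- by move=> x y _ cx _ cy; apply: commrM.
Qed.

Section Gamma.

Variables (S : pzRingType) (eta : {rmorphism {poly int} -> S}) (Q0 Q1 Q2 : S).
Hypothesis rels : gamma_rels eta Q0 Q1 Q2.

Definition gamma_letter (x : nat) : S :=
  match x with 0 => eta 'X | 1 => Q0 | 2 => Q1 | _ => Q2 end%N.

Definition gamma_rules (x y : nat) : option lincomb :=
  match x, y with
  | 1, 0 => Some [:: (1%Z, [:: 0; 0; 1]); ((-2)%Z, [:: 0; 2]); (6%Z, [:: 3])]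
  | 2, 0 => Some [:: (3%Z, [:: 1]); (1%Z, [:: 0; 3])]
  | 3, 0 => Some [:: ((-1)%Z, [:: 0; 1]); (3%Z, [:: 2])]
  | 2, 1 => Some [:: (2%Z, [:: 3; 2]); ((-2)%Z, [:: 1; 3])]
  | 3, 1 => Some [:: (1%Z, [:: 1; 2]); (1%Z, [:: 0; 1; 3]); ((-2)%Z, [:: 2; 3])]
  | _, _ => None
  end%N.

Definition psi_lincomb : lincomb :=
  [:: (1%Z, [:: 1; 1]); (1%Z, [:: 0; 1; 2]); ((-2)%Z, [:: 2; 2]);
      (1%Z, [:: 0; 0; 1; 3]); ((-2)%Z, [:: 0; 2; 3]); (4%Z, [:: 3; 3])].

Lemma gamma_rules_sound x y r :
  gamma_rules x y = Some r ->
  eval_lincomb gamma_letter r = gamma_letter x * gamma_letter y.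
Proof.
case: rels => Q0a Q1a Q2a Q1Q0 Q2Q0.
case: x => [|[|[|[|x]]]] //; case: y => [|[|y]] //= [<-];
  rewrite /eval_lincomb /eval_word !big_cons !big_nil /= !mulr1 addr0.
all: rewrite ?Q0a ?Q1a ?Q2a ?Q1Q0 ?Q2Q0 ?NegzE ?intrN -?pmulrn.
all: by rewrite ?mulNr ?mul1r ?expr2 -?mulrA ?addrA.
Qed.

Lemma Psi_lincomb : Psi eta Q0 Q1 Q2 = eval_lincomb gamma_letter psi_lincomb.
Proof.
rewrite /Psi /eval_lincomb /eval_word !big_cons !big_nil /= !mulr1 addr0.
by rewrite !NegzE !intrN -!pmulrn !mulNr !mul1r expr2 -!mulrA !addrA.
Qed.

Lemma psi_commutators_rewrite_to_zero :
  all (fun x => rewrites_to_zero gamma_rules 6 (commutator_lincomb psi_lincomb x))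
      (iota 0 4).
Proof. by vm_compute. Qed.

Lemma Psi_comm_gamma_letter x :
  (x < 4)%N -> GRing.comm (Psi eta Q0 Q1 Q2) (gamma_letter x).
Proof.
move=> x_lt4; apply/eqP; rewrite -subr_eq0 Psi_lincomb -eval_commutator_lincomb.
apply/eqP/(rewrites_to_zero_eval gamma_rules_sound (n := 6)).
by move/allP: psi_commutators_rewrite_to_zero; apply; rewrite mem_iota.
Qed.

End Gamma.

Theorem mainTheorem2 (S : pzRingType) (eta : {rmorphism {poly int} -> S})
  (Q0 Q1 Q2 : S) :
  gamma_rels eta Q0 Q1 Q2 ->
  forall x : S, gamma_gen eta Q0 Q1 Q2 x ->
    Psi eta Q0 Q1 Q2 * x = x * Psi eta Q0 Q1 Q2.
Proof.
move=> rels; apply: comm_gamma_gen.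
- exact: (Psi_comm_gamma_letter rels (x := 0)).
- exact: (Psi_comm_gamma_letter rels (x := 1)).
- exact: (Psi_comm_gamma_letter rels (x := 2)).
- exact: (Psi_comm_gamma_letter rels (x := 3)).
Qed.
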